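(* Let $S[1..n]$ be a string. Given the lcp array and rank array of $S$, one can compute all useful LLRs of $S$ (listed in increasing order of start position) in $O(n)$ time and space.
   Context: For $1\le i\le j\le n$, $S[i..j]=S[i]\cdots S[j]$. A substring is unique if it has no other occurrence starting at a different position; it is a repeat otherwise. The left-bounded longest repeat starting at position $k$, $\mathrm{LLR}_k$, is a repeat $S[k..j]$ such that either $j=n$ or $S[k..j+1]$ is unique (it does not exist if $S[k]$ is unique). An LLR is useless if its position interval is contained in that of another LLR; otherwise it is useful. The suffix array $SA[1..n]$ is the permutation of $\{1,\ldots,n\}$ listing the starting positions of suffixes of $S$ in increasing lexicographic order (a proper prefix is smaller). The rank array is its inverse: $\mathrm{Rank}[i]=j$ iff $SA[j]=i$. The lcp array $\mathrm{LCP}[1..n+1]$ has $\mathrm{LCP}[1]=\mathrm{LCP}[n+1]=0$ and, for $2\le i\le n$, $\mathrm{LCP}[i]$ is the length of the longest common prefix of $S[SA[i-1]..n]$ and $S[SA[i]..n]$. Complexity is in the word-RAM model with each integer in $\{0,\ldots,n+1\}$ occupying a constant number of words. *)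

From mathcomp Require Import all_boot all_order.
Set Implicit Arguments. Unset Strict Implicit. Unset Printing Implicit Defensive.
Import Order.TTheory.

(* Strings, suffixes, substrings (1-based positions as in the paper). *)
Section Strings.
Variables (d : Order.disp_t) (T : orderType d).

Definition suf (S : seq T) (i : nat) : seq T := drop i.-1 S.

Definition substr (S : seq T) (i j : nat) : seq T := take (j - i).+1 (drop i.-1 S).

Fixpoint lexlt (s t : seq T) : bool :=
  match s, t with
  | [::], [::] => false
  | [::], _ :: _ => true
  | _ :: _, [::] => false
  | x :: s', y :: t' => (x < y)%O || ((x == y) && lexlt s' t')
  end.

Fixpoint lcp_len (s t : seq T) : nat :=
  match s, t with
  | x :: s', y :: t' => if x == y then (lcp_len s' t').+1 else 0
  | _, _ => 0
  end.

Definition occurs_at (S : seq T) (i j p : nat) : bool :=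
  [&& 1 <= p, p + (j - i) <= size S & substr S p (p + (j - i)) == substr S i j].

Definition is_repeat (S : seq T) (i j : nat) : bool :=
  has (fun p => (p != i) && occurs_at S i j p) (iota 1 (size S)).

Definition is_unique (S : seq T) (i j : nat) : bool := ~~ is_repeat S i j.

Definition is_LLR (S : seq T) (k j : nat) : bool :=
  [&& 1 <= k, k <= j, j <= size S, is_repeat S k j &
      (j == size S) || is_unique S k j.+1].

Definition is_useful_LLR (S : seq T) (k j : nat) : bool :=
  is_LLR S k j &&
  ~~ has (fun k' => has (fun j' => [&& is_LLR S k' j', (k', j') != (k, j),
                                     k' <= k & j <= j'])
                        (iota 1 (size S)))
         (iota 1 (size S)).

Definition useful_LLRs (S : seq T) : seq (nat * nat) :=
  [seq kj <- [seq (k, j) | k <- iota 1 (size S), j <- iota 1 (size S)]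
   | is_useful_LLR S kj.1 kj.2].

Definition is_rank (S : seq T) (rk : nat -> nat) : Prop :=
  let n := size S in
  (forall i, 1 <= i <= n -> 1 <= rk i <= n) /\
  {in [pred i | 1 <= i <= n] &, injective rk} /\
  (forall i j, 1 <= i <= n -> 1 <= j <= n ->
     (rk i < rk j) = lexlt (suf S i) (suf S j)).

(* lcpa : nat -> nat is the lcp array LCP[1..n+1] of S, given its rank
   array rk: LCP[1] = LCP[n+1] = 0 and LCP[Rank[j]] is the lcp of the
   suffixes SA[Rank[j]-1] = i and SA[Rank[j]] = j. *)
Definition is_lcp (S : seq T) (rk : nat -> nat) (lcpa : nat -> nat) : Prop :=
  let n := size S in
  lcpa 1 = 0 /\ lcpa n.+1 = 0 /\
  (forall i j, 1 <= i <= n -> 1 <= j <= n -> rk j = (rk i).+1 ->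
     lcpa (rk j) = lcp_len (suf S i) (suf S j)).

End Strings.

(* A minimal word-RAM: finitely many registers (those named by the    *)
(* program), a random-access memory, unit-cost instructions.          *)
Inductive instr : Type :=
  | IConst of nat & nat
  | IAdd of nat & nat & nat
  | ISub of nat & nat & nat    (* r := a - b (truncated)       *)
  | ILoad of nat & nat
  | IStore of nat & nat
  | IJz of nat & nat
  | IJlt of nat & nat & nat
  | IJmp of nat
  | IOut of nat
  | IHalt.

Record config := Config {
  pc : nat; regs : nat -> nat; mem : nat -> nat; out : seq nat }.

Definition upd (f : nat -> nat) (a v : nat) : nat -> nat :=
  fun x => if x == a then v else f x.

Definition cur_instr (P : seq instr) (c : config) : instr := nth IHalt P (pc c).

Definition halted (P : seq instr) (c : config) : bool :=
  if cur_instr P c is IHalt then true else false.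

Definition step (P : seq instr) (c : config) : config :=
  let R := regs c in let M := mem c in let p := pc c in
  match cur_instr P c with
  | IConst r v => Config p.+1 (upd R r v) M (out c)
  | IAdd r a b => Config p.+1 (upd R r (R a + R b)) M (out c)
  | ISub r a b => Config p.+1 (upd R r (R a - R b)) M (out c)
  | ILoad r a => Config p.+1 (upd R r (M (R a))) M (out c)
  | IStore a b => Config p.+1 R (upd M (R a) (R b)) (out c)
  | IJz a l => Config (if R a == 0 then l else p.+1) R M (out c)
  | IJlt a b l => Config (if R a < R b then l else p.+1) R M (out c)
  | IJmp l => Config l R M (out c)
  | IOut a => Config p.+1 R M (rcons (out c) (R a))
  | IHalt => c
  end.

(* The step from c respects the space bound A (every memory address
   accessed is < A) and the word bound W (every value written is < W). *)
Definition step_ok (P : seq instr) (A W : nat) (c : config) : bool :=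
  let R := regs c in let M := mem c in
  match cur_instr P c with
  | IConst _ v => v < W
  | IAdd _ a b => R a + R b < W
  | ILoad _ a => (R a < A) && (M (R a) < W)
  | IStore a b => (R a < A) && (R b < W)
  | _ => true
  end.

Definition runs_within (P : seq instr) (M0 : nat -> nat)
    (Tmax A W : nat) (o : seq nat) : Prop :=
  let c0 := Config 0 (fun _ => 0) M0 [::] in
  exists t, [/\ t <= Tmax,
    halted P (iter t (step P) c0),
    out (iter t (step P) c0) = o &
    forall i, i < t -> step_ok P A W (iter i (step P) c0)].

Definition input_mem (n : nat) (rk lcpa : nat -> nat) : nat -> nat :=
  fun x => if x == 0 then n
           else if x <= n then rk x
           else if x <= n + n.+1 then lcpa (x - n)
           else 0.

Definition encode_pairs (s : seq (nat * nat)) : seq nat :=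
  flatten [seq [:: kj.1; kj.2] | kj <- s].

From Pilot Require Import Defs.
From mathcomp Require Import all_boot all_order.
From mathcomp Require Import zify.
Import Order.TTheory.

(* For x < y < z lexicographically, lcp(x, z) <= min(lcp(x, y), lcp(y, z));
   hence the longest prefix that suffix k shares with any other suffix is
   shared with a neighbour in the suffix array, and has length
   L_k = max(LCP[Rank k], LCP[Rank k + 1]).  So LLR_k exists iff L_k > 0,
   and then it is S[k..k+L_k-1].  An LLR can only be contained in one that
   starts no later, so LLR_k is useful iff its end exceeds the ends of all
   earlier LLRs.  One left-to-right scan computing L_k from the two arrays
   and keeping the largest end seen so far thus reports exactly the useful
   LLRs, in order, with a constant number of word-RAM steps per position. *)

Section LongestCommonPrefix.
Context {d : Order.disp_t} {T : orderType d}.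
Implicit Types s t x y z S : seq T.

Lemma lcp_lenE s t m :
  (m <= lcp_len s t) = [&& m <= size s, m <= size t & take m s == take m t].
Proof.
elim: s t m => [|a s IH] [|b t] [|m] //=; rewrite ?andbF //.
rewrite eqseq_cons; case: (a == b) => /=; last by rewrite !andbF.
by rewrite ltnS IH.
Qed.

Lemma lcp_lenC s t : lcp_len s t = lcp_len t s.
Proof.
elim: s t => [|a s IH] [|b t] //=.
by rewrite eq_sym; case: (b == a); rewrite ?IH.
Qed.

Lemma lcp_len_size s t : lcp_len s t <= size s.
Proof. by elim: s t => [|a s IH] [|b t] //=; case: (a == b); rewrite ?ltnS. Qed.

Lemma lexlt_lcp_len x y z : lexlt x y -> lexlt y z ->
  lcp_len x z <= minn (lcp_len x y) (lcp_len y z).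
Proof.
elim: x y z => [|a x IH] [|b y] [|c z] //=.
case/orP => [ab | /andP[/eqP ab xy]]; case/orP => [bc | /andP[/eqP bc yz]].
- by rewrite (lt_eqF (lt_trans ab bc)).
- by rewrite -bc (lt_eqF ab).
- by rewrite ab (lt_eqF bc).
- by rewrite ab bc eqxx minnSS ltnS IH.
Qed.

Lemma occurs_at_lcp_len S k j p :
  1 <= k <= j -> j <= size S -> 1 <= p ->
  occurs_at S k j p = ((j - k).+1 <= lcp_len (suf S p) (suf S k)).
Proof.
move=> /andP[k1 kj] jn p1.
rewrite /occurs_at /substr /suf lcp_lenE !size_drop addKn p1 eq_sym /=.
have -> : ((j - k).+1 <= size S - k.-1) = true by apply/idP; lia.
by congr andb; apply/idP/idP; lia.
Qed.

Lemma is_repeat_lcp_len S k j :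
  1 <= k <= j -> j <= size S ->
  is_repeat S k j = has (fun p => (p != k) &&
                          ((j - k).+1 <= lcp_len (suf S p) (suf S k)))
                        (iota 1 (size S)).
Proof.
move=> kj jn; apply: eq_in_has => p; rewrite mem_iota => /andP[p1 _].
by rewrite occurs_at_lcp_len.
Qed.

End LongestCommonPrefix.

Section LeftToRightScan.
Variable f : nat -> nat.

(* Position i with f i > 0 stands for the interval [i, i + f i - 1]. *)
Definition max_end k := \max_(1 <= i < k | 0 < f i) (i + f i).-1.

Definition report i :=
  if (0 < f i) && (max_end i < (i + f i).-1) then [:: i; (i + f i).-1] else [::].

Definition reports k := flatten [seq report i | i <- iota 1 k.-1].

Lemma max_endS k : 1 <= k ->
  max_end k.+1 = maxn (max_end k) (if 0 < f k then (k + f k).-1 else 0).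
Proof. by move=> k1; rewrite /max_end big_mkcond big_nat_recr //= -big_mkcond. Qed.

Lemma max_end_step k : 1 <= k -> max_end k.+1 =
  if (0 < f k) && (max_end k < (k + f k).-1) then (k + f k).-1 else max_end k.
Proof.
move=> k1; rewrite max_endS //; case: (0 < f k); last by rewrite maxn0.
by rewrite /maxn.
Qed.

Lemma reportsS k : 1 <= k -> reports k.+1 = reports k ++ report k.
Proof.
move=> k1; rewrite /reports /=.
have -> : k = k.-1 + 1 by lia.
by rewrite iotaD map_cat flatten_cat /= cats0 addn1 add1n.
Qed.

Lemma max_end_ltE k x : 1 <= k -> 0 < x ->
  (max_end k < x) = all (fun i => (0 < f i) ==> ((i + f i).-1 < x)) (iota 1 k.-1).
Proof.
case: k => // m _ x0; elim: m => [|m IH]; first by rewrite /max_end big_geq.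
have -> : iota 1 m.+1 = rcons (iota 1 m) m.+1.
  by rewrite -cats1 -(addn1 m) iotaD /= addnC.
rewrite max_endS // gtn_max IH all_rcons andbC.
by case: (0 < f m.+1); rewrite /= ?x0.
Qed.

End LeftToRightScan.

Lemma encode_pairs_flatten (A : Type) (g : A -> seq (nat * nat)) s :
  encode_pairs (flatten [seq g k | k <- s]) = flatten [seq encode_pairs (g k) | k <- s].
Proof. by elim: s => //= a s IH; rewrite /encode_pairs map_cat flatten_cat -IH. Qed.

Lemma inj_segment_onto n (f : nat -> nat) :
  (forall i, 1 <= i <= n -> 1 <= f i <= n) ->
  {in [pred i | 1 <= i <= n] &, injective f} ->
  forall r, 1 <= r <= n -> exists2 i, 1 <= i <= n & f i = r.
Proof.
move=> rng inj r hr.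
have U : uniq (map f (iota 1 n)).
  rewrite map_inj_in_uniq ?iota_uniq // => x y; rewrite !mem_iota => hx hy.
  by apply: inj; rewrite inE; lia.
have sub : {subset map f (iota 1 n) <= iota 1 n}.
  by move=> x /mapP [i]; rewrite !mem_iota => hi ->; have := rng i; lia.
have [_ eqm] := uniq_min_size U sub ltac:(by rewrite size_map).
have : r \in map f (iota 1 n) by rewrite eqm mem_iota; lia.
by case/mapP => i; rewrite mem_iota => hi ->; exists i => //; lia.
Qed.

Definition llr_len (rk lcpa : nat -> nat) k := maxn (lcpa (rk k)) (lcpa (rk k).+1).

Section LLRsFromArrays.
Variables (d : Order.disp_t) (T : orderType d) (S : seq T) (rk lcpa : nat -> nat).
Hypotheses (hrk : is_rank S rk) (hlcp : is_lcp S rk lcpa).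

Local Notation n := (size S).
Local Notation L := (llr_len rk lcpa).

Lemma rank_pred {k} : 1 <= k <= n -> 1 < rk k ->
  exists2 i, 1 <= i <= n & rk k = (rk i).+1.
Proof.
case: hrk => rng [inj _] hk r1.
have [i hi ri] := @inj_segment_onto n rk rng inj (rk k).-1
  ltac:(have := rng k hk; lia).
by exists i => //; lia.
Qed.

Lemma rank_succ {k} : 1 <= k <= n -> rk k < n ->
  exists2 j, 1 <= j <= n & rk j = (rk k).+1.
Proof.
case: hrk => rng [inj _] hk rn.
by apply: (@inj_segment_onto n rk rng inj); have := rng k hk; lia.
Qed.

(* Suffixes of rank below [rk k] (resp. above) share no longer a prefix with
   suffix k than its predecessor (resp. successor) in the suffix array. *)
Lemma lcp_len_le_llr_len {p k} : 1 <= p <= n -> 1 <= k <= n -> p != k ->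
  lcp_len (suf S p) (suf S k) <= L k.
Proof.
case: hrk hlcp => rng [inj ord] [_ [_ lr]] hp hk pk.
have injE x y : 1 <= x <= n -> 1 <= y <= n -> rk x = rk y -> x = y.
  by move=> hx hy; apply: inj; rewrite inE.
have nrk : rk p != rk k by apply: contra pk => /eqP /(injE _ _ hp hk) ->.
have := rng p hp; have := rng k hk.
rewrite /llr_len leq_max; case: (ltngtP (rk p) (rk k)) nrk => //= hlt _ rkk rkp.
- have [i hi rki] := rank_pred hk ltac:(lia).
  apply/orP; left; rewrite (lr i k hi hk rki).
  case: (eqVneq p i) => [-> //|pi].
  have hpi : rk p < rk i by have := injE p i hp hi; lia.
  apply: leq_trans (geq_minr _ _).
  by apply: lexlt_lcp_len; rewrite -ord // rki.
- have [j hj rj] := rank_succ hk ltac:(lia).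
  apply/orP; right; rewrite -rj (lr k j hk hj rj) lcp_lenC.
  case: (eqVneq p j) => [-> //|pj].
  have hpj : rk j < rk p by have := injE p j hp hj; lia.
  apply: leq_trans (geq_minl _ _).
  by apply: lexlt_lcp_len; rewrite -ord // rj.
Qed.

Lemma llr_len_attained {k} : 1 <= k <= n -> 0 < L k ->
  exists2 p, 1 <= p <= n & (p != k) && (L k <= lcp_len (suf S p) (suf S k)).
Proof.
case: hlcp => l1 [ln lr] hk; have [/(_ k hk) rkk _] := hrk.
rewrite /llr_len /maxn; case: (ltnP (lcpa (rk k)) (lcpa (rk k).+1)) => _ L0.
- have [j hj rj] : exists2 j, 1 <= j <= n & rk j = (rk k).+1.
    apply: rank_succ hk _.
    by case: (ltngtP (rk k) n) L0 => // [|->]; [lia | rewrite ln].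
  exists j => //; rewrite lcp_lenC -(lr k j hk hj rj) rj leqnn andbT.
  by apply/negP => /eqP jk; move: rj; rewrite jk; lia.
- have [i hi rki] : exists2 i, 1 <= i <= n & rk k = (rk i).+1.
    apply: rank_pred hk _.
    by case: (ltngtP (rk k) 1) L0 => // [|->]; [lia | rewrite l1].
  exists i => //; rewrite -(lr i k hi hk rki) leqnn andbT.
  by apply/negP => /eqP ik; move: rki; rewrite ik; lia.
Qed.

Lemma has_lcp_len_neighbour k m : 1 <= k <= n -> 1 <= m ->
  has (fun p => (p != k) && (m <= lcp_len (suf S p) (suf S k))) (iota 1 n)
  = (m <= L k).
Proof.
move=> hk m1; apply/hasP/idP.
- move=> [p]; rewrite mem_iota => hp /andP[pk mp].
  by apply: leq_trans mp (lcp_len_le_llr_len _ hk pk); lia.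
- move=> mL; have [p hp /andP[pk Lp]] := llr_len_attained hk (leq_trans m1 mL).
  by exists p; [rewrite mem_iota; lia | rewrite pk (leq_trans mL Lp)].
Qed.

Lemma llr_len_bound {k} : 1 <= k <= n -> k + L k <= n.+1.
Proof.
move=> hk; case: (posnP (L k)) => [-> | L0]; first lia.
have [p _ /andP[_ Lp]] := llr_len_attained hk L0.
rewrite lcp_lenC in Lp.
by have := leq_trans Lp (lcp_len_size _ _); rewrite /suf size_drop; lia.
Qed.

Lemma is_repeat_llr_len k j : 1 <= k <= j -> j <= n ->
  is_repeat S k j = (j - k < L k).
Proof.
by move=> kj jn; rewrite is_repeat_lcp_len // has_lcp_len_neighbour //; lia.
Qed.

Lemma is_LLRE k j :
  is_LLR S k j = [&& 1 <= k <= n, 0 < L k & j == (k + L k).-1].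
Proof.
apply/idP/idP.
- case/and5P => k1 kj jn rep tl.
  have hk : 1 <= k <= n by lia.
  have Lb := llr_len_bound hk.
  rewrite is_repeat_llr_len ?k1 // in rep.
  rewrite hk /=; case: (eqVneq j n) tl => [jE _ | jn'] /=.
    by apply/andP; split; [lia | apply/eqP; lia].
  rewrite /is_unique is_repeat_llr_len; last 2 first; [lia|lia|].
  by move=> un; apply/andP; split; [lia | apply/eqP; lia].
- case/and3P => hk L0 /eqP ->.
  have Lb := llr_len_bound hk.
  rewrite /is_LLR is_repeat_llr_len; last 2 first; [lia|lia|].
  apply/and5P; split; try lia.
  case: (eqVneq (k + L k).-1 n) => //= jn.
  by rewrite /is_unique is_repeat_llr_len; lia.
Qed.

Lemma is_useful_LLRE k j : 1 <= k <= n ->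
  is_useful_LLR S k j =
    [&& 0 < L k, max_end L k < (k + L k).-1 & j == (k + L k).-1].
Proof.
move=> hk; rewrite /is_useful_LLR is_LLRE hk /=.
case L0: (0 < L k) => //=.
case: (eqVneq j (k + L k).-1) => [jE | _]; last by rewrite andbF.
rewrite andbT max_end_ltE; [|lia|lia].
rewrite -[RHS]negbK -has_predC; congr (~~ _).
apply/hasP/hasP.
- move=> [k' hk' /hasP [j' hj' /and4P [llr ne k'k jj']]].
  move: llr; rewrite is_LLRE => /and3P [hk'' Lk' /eqP je].
  case: (eqVneq k' k) ne => [ek|nek] ne.
    by move: ne; rewrite je jE ek eqxx.
  exists k'; first by rewrite mem_iota; lia.
  by rewrite /= negb_imply Lk' -leqNgt -je -jE jj'.
- move=> [i]; rewrite mem_iota /= negb_imply -leqNgt => hi /andP [Li ei].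
  have hi' : 1 <= i <= n by lia.
  have bi := llr_len_bound hi'.
  exists i; first by rewrite mem_iota; lia.
  apply/hasP; exists (i + L i).-1; first by rewrite mem_iota; lia.
  rewrite is_LLRE hi' Li eqxx /= xpair_eqE.
  by apply/and3P; split; [apply/nandP; left; apply/eqP|..]; lia.
Qed.

Lemma encode_useful_LLRs : encode_pairs (useful_LLRs S) = reports L n.+1.
Proof.
rewrite /useful_LLRs filter_flatten -map_comp encode_pairs_flatten /reports /=.
congr flatten; apply/eq_in_map => k; rewrite mem_iota => hk /=.
have hk' : 1 <= k <= n by lia.
rewrite filter_map (eq_in_filter (a2 := fun j =>
  [&& 0 < L k, max_end L k < (k + L k).-1 & j == (k + L k).-1])); last first.
  by move=> j _; rewrite /preim /= is_useful_LLRE.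
rewrite /report; case: ifP => c.
  rewrite (eq_filter (a2 := pred1 (k + L k).-1)); last by move=> j; rewrite andbA c.
  have bk := llr_len_bound hk'; case/andP: c => c1 _.
  by rewrite filter_pred1_uniq ?iota_uniq // mem_iota; lia.
by rewrite (eq_filter (a2 := pred0)) ?filter_pred0 // => j; rewrite andbA c.
Qed.

End LLRsFromArrays.

Arguments llr_len_bound {d T S rk lcpa} hrk hlcp {k}.
Arguments encode_useful_LLRs {d T S rk lcpa} hrk hlcp.

Section Runs.
Variables (P : seq instr) (A W : nat).

Definition runs_from (c : config) (T : nat) (c' : config) : Prop :=
  exists t, [/\ t <= T, iter t (step P) c = c' &
                forall i, i < t -> step_ok P A W (iter i (step P) c)].

Definition runs_to (c : config) (T : nat) (Q : config -> Prop) : Prop :=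
  exists2 c', runs_from c T c' & Q c'.

Lemma runs_to_now c T (Q : config -> Prop) : Q c -> runs_to c T Q.
Proof. by exists c => //; exists 0. Qed.

Lemma runs_to_step c T Q :
  step_ok P A W c -> runs_to (step P c) T Q -> runs_to c T.+1 Q.
Proof.
move=> ok [c' [t [tT it Hok]] Qc']; exists c' => //; exists t.+1.
split; [by []|by rewrite iterSr|].
by case=> [|i] //; rewrite ltnS => /Hok; rewrite iterSr.
Qed.

Lemma runs_to_seq c T1 T2 (Q1 Q2 : config -> Prop) :
  runs_to c T1 Q1 -> (forall c1, Q1 c1 -> runs_to c1 T2 Q2) ->
  runs_to c (T1 + T2) Q2.
Proof.
move=> [c1 [t1 [h1 e1 o1]] Q1c1] /(_ c1 Q1c1) [c2 [t2 [h2 e2 o2]] Q2c2].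
exists c2 => //; exists (t2 + t1); split; [lia|by rewrite iterD e1|].
move=> i hi; case: (ltnP i t1) => hi1; first exact: o1.
by rewrite -(subnK hi1) iterD e1; apply: o2; lia.
Qed.

Lemma runs_to_conseq c T (Q Q' : config -> Prop) :
  runs_to c T Q -> (forall c', Q c' -> Q' c') -> runs_to c T Q'.
Proof. by move=> [c' run Qc'] QQ'; exists c'; last exact: QQ'. Qed.

End Runs.

Arguments runs_to_now {P A W c T Q}.
Arguments runs_to_step {P A W c T Q}.
Arguments runs_to_seq {P A W c T1 T2 Q1 Q2}.
Arguments runs_to_conseq {P A W c T Q Q'}.

(* Registers: 0 holds 0, 1 holds n, 2 the position k, 3 the largest end of
   an LLR reported so far, 4 the constant 1, 9 the length L_k and 10 the
   end k + L_k - 1 of LLR_k. *)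
Definition llr_prog : seq instr :=
 [:: ILoad 1 0; IConst 4 1; IConst 2 1; IJlt 1 2 22;
     ILoad 5 2; IAdd 6 1 5; ILoad 7 6; IAdd 6 6 4; ILoad 8 6;
     IAdd 9 7 0; IJlt 8 7 12; IAdd 9 8 0; IJz 9 20;
     IAdd 10 2 9; ISub 10 10 4; IJlt 3 10 17; IJmp 20;
     IOut 2; IOut 10; IAdd 3 10 0; IAdd 2 2 4; IJmp 3; IHalt].

Definition loop_regs n k best (R : nat -> nat) :=
  [/\ R 0 = 0, R 1 = n, R 2 = k, R 3 = best & R 4 = 1].

Definition mem_encodes n (f : nat -> nat) (M : nat -> nat) :=
  M 0 = n /\ forall k, 1 <= k <= n ->
    [/\ M k <= n, M (n + M k) <= n, M (n + M k + 1) <= n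
      & maxn (M (n + M k)) (M (n + M k + 1)) = f k].

Ltac exec_ok := rewrite /step_ok /cur_instr /= /upd /=.
Ltac exec := rewrite /step /cur_instr /= /upd /=.
Ltac exec_step E HW :=
  apply: runs_to_step;
  [ exec_ok; rewrite ?E;
    first [done | (apply/andP; split; [lia | apply: HW; lia]) | (apply: HW; lia)]
  | exec; rewrite ?E ].

Section ScanProgram.
Variables (n A W : nat).
Hypotheses (HA : 2 * n + 1 < A) (HW : forall x, x <= 2 * n + 2 -> x < W).

Local Notation runs_to := (runs_to llr_prog A W).

Lemma run_llr_len {k best r a b R M o} :
  loop_regs n k best R -> M k = r -> M (n + r) = a -> M (n + r + 1) = b ->
  1 <= k <= n -> r <= n -> a <= n -> b <= n ->
  runs_to (Config 3 R M o) 9 (fun c =>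
    [/\ pc c = 12, Defs.mem c = M, loop_regs n k best (regs c),
        regs c 9 = maxn a b & out c = o]).
Proof.
move=> [R0 R1 R2 R3 R4] Mk Ma Mb /andP[k1 kn] rn an bn.
have E := (R0, R1, R2, R3, R4, Mk, Ma, Mb).
apply: runs_to_step; first by exec_ok.
exec; rewrite R1 R2 ltnNge kn /=.
do 6 exec_step E HW.
apply: runs_to_step; first by exec_ok.
exec; rewrite ?E.
case ab: (b < a).
  by apply: runs_to_now; rewrite /= ?E addn0 /maxn ltnNge ltnW.
exec_step E HW.
apply: runs_to_now; rewrite /= ?E addn0 /maxn.
by case: ltngtP ab => // ->.
Qed.

Lemma run_report {k best L R M o} :
  loop_regs n k best R -> R 9 = L -> 1 <= k <= n -> k + L <= n.+1 ->
  runs_to (Config 12 R M o) 9 (fun c =>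
    [/\ pc c = 3, Defs.mem c = M,
        loop_regs n k.+1
          (if (0 < L) && (best < (k + L).-1) then (k + L).-1 else best) (regs c)
      & out c = o ++ (if (0 < L) && (best < (k + L).-1)
                      then [:: k; (k + L).-1] else [::])]).
Proof.
move=> [R0 R1 R2 R3 R4] R9 /andP[k1 kn] kL.
have E := (R0, R1, R2, R3, R4, R9).
apply: runs_to_step; first by exec_ok.
exec; rewrite ?E.
case: (posnP L) => [_|Lp] /=.
  do 2 exec_step E HW.
  by apply: runs_to_now; rewrite /= ?E cats0 addn1.
do 2 exec_step E HW.
apply: runs_to_step; first by exec_ok.
exec; rewrite ?E subn1.
case: ltnP => bL.
  do 5 exec_step E HW.
  by apply: runs_to_now; rewrite /= ?E addn0 addn1 -!cats1 -catA.
do 3 exec_step E HW.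
by apply: runs_to_now; rewrite /= ?E addn1 cats0.
Qed.

Variables (f M : nat -> nat).
Hypotheses (hM : mem_encodes n f M) (hf : forall k, 1 <= k <= n -> k + f k <= n.+1).

Definition scan_state k c :=
  [/\ pc c = 3, Defs.mem c = M, loop_regs n k (max_end f k) (regs c)
    & out c = reports f k].

Lemma run_scan_step {k c} : 1 <= k <= n -> scan_state k c ->
  runs_to c 18 (scan_state k.+1).
Proof.
rewrite -[18]/(9 + 9).
case: c => p R M' o hk [/= -> -> hR ->]; have [_ /(_ k hk) [rn an bn Mf]] := hM.
apply: (runs_to_seq (run_llr_len hR erefl erefl erefl hk rn an bn)).
case=> p1 R1 M1 o1 [/= -> -> hR1 R19 ->]; rewrite Mf in R19.
apply: (runs_to_conseq (run_report hR1 R19 hk (hf k hk))).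
case=> p2 R2 M2 o2 [/= -> -> hR2 ->]; case/andP: hk => k1 _.
by split; rewrite //= ?max_end_step ?reportsS.
Qed.

Lemma run_scan m k c : k + m = n.+1 -> 1 <= k -> scan_state k c ->
  runs_to c (18 * m + 1) (fun c' => halted llr_prog c' /\ out c' = reports f n.+1).
Proof.
elim: m k c => [|m IH] k c km k1 hc.
  rewrite addn0 in km; subst k.
  case: c hc => p R M' o [/= -> -> [_ R1 R2 _ _] ->].
  apply: runs_to_step; first by rewrite /step_ok.
  by exec; rewrite R1 R2 ltnSn; apply: runs_to_now.
rewrite mulnS -addnA.
apply: (runs_to_seq (run_scan_step _ hc)); first by apply/andP; split; lia.
by move=> c1 hc1; apply: IH hc1; lia.
Qed.

End ScanProgram.

Lemma llr_prog_runs_within n f M :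
  mem_encodes n f M -> (forall k, 1 <= k <= n -> k + f k <= n.+1) ->
  runs_within llr_prog M (20 * n + 20) (20 * n + 20) (n.+2 ^ 20) (reports f n.+1).
Proof.
move=> hM hf; have [M0 _] := hM.
have HA : 2 * n + 1 < 20 * n + 20 by lia.
have HW x : x <= 2 * n + 2 -> x < n.+2 ^ 20.
  move=> hx; apply: (@leq_trans (n.+2 ^ 2)); last by rewrite leq_exp2l.
  by rewrite expnS expn1; nia.
have [c [t [tT <- ok]] [halt outc]] :
    runs_to llr_prog (20 * n + 20) (n.+2 ^ 20) (Config 0 (fun _ => 0) M [::])
      (3 + (18 * n + 1)) (fun c => halted llr_prog c /\ out c = reports f n.+1).
  have E := M0.
  do 3 exec_step E HW.
  apply: (@run_scan _ _ _ HA HW _ _ hM hf n 1) => //.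
  by split; rewrite //= /max_end big_geq.
by exists t; split => //; lia.
Qed.

Lemma input_mem_rank n rk lcpa i : 1 <= i <= n -> input_mem n rk lcpa i = rk i.
Proof. by case/andP=> i1 iN; rewrite /input_mem gtn_eqF // iN. Qed.

Lemma input_mem_lcp n rk lcpa i :
  1 <= i <= n.+1 -> input_mem n rk lcpa (n + i) = lcpa i.
Proof.
case/andP=> i1 iN; rewrite /input_mem addn_eq0 (gtn_eqF i1) andbF.
by rewrite leqNgt -{1}[n]addn0 ltn_add2l i1 leq_add2l iN addKn.
Qed.

Lemma input_mem_encodes d (T : orderType d) (S : seq T) rk lcpa :
  is_rank S rk -> is_lcp S rk lcpa ->
  mem_encodes (size S) (llr_len rk lcpa) (input_mem (size S) rk lcpa).
Proof.
move=> hrk hlcp; split=> // k hk; have [/(_ k hk) rkk _] := hrk.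
have := llr_len_bound hrk hlcp hk.
rewrite input_mem_rank // -addnA addn1 !input_mem_lcp /llr_len; try lia.
by split=> //; lia.
Qed.

Theorem lemma6 :
  exists (P : seq instr) (c : nat),
    forall (d : Order.disp_t) (T : orderType d) (S : seq T)
           (rk lcpa : nat -> nat),
      is_rank S rk -> is_lcp S rk lcpa ->
      runs_within P (input_mem (size S) rk lcpa)
        (c * size S + c) (c * size S + c) ((size S).+2 ^ c)
        (encode_pairs (useful_LLRs S)).
Proof.
exists llr_prog, 20 => d T S rk lcpa hrk hlcp.
rewrite (encode_useful_LLRs hrk hlcp).
apply: llr_prog_runs_within; first exact: input_mem_encodes.
exact: llr_len_bound.
Qed.
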